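(* Let $(G,Y)$ be a finite $C$-group and let $s=s'\cdot s''\in S(G,Y)^G$ with $\tau_i(s)\ge 2n_ip_i+1$ and $\tau_i(s'')=0$ for some index $i$. Then $s$ can be written in the form $s=s_{\Gamma_i}\cdot s_i\cdot s''$ where $s_i\cdot s''\in S(G,Y)^G$ and $s_{\Gamma_i}=\prod_{j=1}^{n_i}x_{y_{i,j}}^{p_i}$.
   Context: A finite $C$-group is a pair $(G,Y)$ with $Y$ a finite conjugation-invariant subset of the group $G$, $1\notin Y$, such that $G$ has a presentation with generators the elements of $Y$ and defining relations all of the form $z^{-1}yz=y'$ ($y,y',z\in Y$). $Y=C_1\sqcup\dots\sqcup C_m$ is the decomposition into conjugacy classes of $G$, enumerated $C_i=\{y_{i,1},\dots,y_{i,n_i}\}$; $p_i$ is the least $p\ge1$ with $y^p$ central in $G$ for $y\in C_i$. The factorization semigroup $S(G,Y)$ is generated by symbols $x_y$, $y\in Y$, subject to $x_{g_1}x_{g_2}=x_{g_2}x_{g_2^{-1}g_1g_2}=x_{g_1g_2g_1^{-1}}x_{g_1}$ ($g_1,g_2\in Y$). For $s=x_{g_1}\cdots x_{g_n}$, $G_s$ is the subgroup generated by $g_1,\dots,g_n$ (well defined), $S(G,Y)^G=\{s:G_s=G\}$, and $\tau_i(s)$ is the number of factors of $s$ from $\{x_y:y\in C_i\}$. *)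

From HB Require Import structures.
From mathcomp Require Import all_boot.
Set Implicit Arguments. Unset Strict Implicit. Unset Printing Implicit Defensive.
Local Open Scope group_scope.

(* Groups are arbitrary (possibly infinite) groups: [groupType]
   from mathcomp/boot/monoid.v.  Conjugation [x ^ y] = y^-1 * x * y. *)

Inductive gen_by (G : groupType) (A : pred G) : G -> Prop :=
  | gen_in x : A x -> gen_by A x
  | gen_one : gen_by A 1
  | gen_mul x y : gen_by A x -> gen_by A y -> gen_by A (x * y)
  | gen_inv x : gen_by A x -> gen_by A (x^-1).

Definition generates (G : groupType) (A : pred G) : Prop := forall g : G, gen_by A g.

Definition is_group_hom (G H : groupType) (phi : G -> H) : Prop :=
  forall a b : G, phi (a * b) = phi a * phi b.

(* (G,Y) is a finite C-group: Y finite (a list), conjugation invariant,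
   1 \notin Y, and G has a presentation with generators Y and defining
   relations all of the form z^-1 y z = y' (y,y',z in Y).  The presentation
   condition is rendered by its universal property: Y generates G, and any map
   on Y into a group H respecting all relations z^-1 y z = y' that hold in G
   extends to a homomorphism G -> H. *)
Definition C_group (G : groupType) (Y : seq G) : Prop :=
  [/\ forall y g, y \in Y -> y ^ g \in Y,
      1 \notin Y,
      generates (mem Y) &
      forall (H : groupType) (f : G -> H),
        (forall y z, y \in Y -> z \in Y -> f (y ^ z) = (f z)^-1 * f y * f z) ->
        exists phi : G -> H, is_group_hom phi /\ forall y, y \in Y -> phi y = f y].

(* Elementary Hurwitz-type moves of the factorization semigroup:
   x_{g1} x_{g2} = x_{g2} x_{g2^-1 g1 g2} = x_{g1 g2 g1^-1} x_{g1}.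
   Words x_{g1}...x_{gn} are represented by the list [g1;...;gn]. *)
Inductive hstep (G : groupType) : seq G -> seq G -> Prop :=
  | hstep_r (a b : seq G) (g1 g2 : G) :
      hstep (a ++ g1 :: g2 :: b) (a ++ g2 :: (g2^-1 * g1 * g2) :: b)
  | hstep_l (a b : seq G) (g1 g2 : G) :
      hstep (a ++ g1 :: g2 :: b) (a ++ (g1 * g2 * g1^-1) :: g1 :: b).

(* Equality in S(G,Y): the congruence generated by the moves. *)
Inductive sequiv (G : groupType) : seq G -> seq G -> Prop :=
  | sequiv_refl s : sequiv s s
  | sequiv_step s t : hstep s t -> sequiv s t
  | sequiv_sym s t : sequiv s t -> sequiv t s
  | sequiv_trans s t u : sequiv s t -> sequiv t u -> sequiv s u.

Definition word_over (G : groupType) (Y : seq G) (s : seq G) : bool :=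
  all (fun g => g \in Y) s.

(* s \in S(G,Y)^G : the letters of s generate G, i.e. G_s = G. *)
Definition full_word (G : groupType) (s : seq G) : Prop := generates (mem s).

Definition central (G : groupType) (c : G) : Prop := forall g : G, c * g = g * c.

Definition enum_class (G : groupType) (y0 : G) (e : seq G) : Prop :=
  uniq e /\ forall y : G, y \in e <-> exists g : G, y = y0 ^ g.

Definition least_central_power (G : groupType) (y0 : G) (p : nat) : Prop :=
  (0 < p)%N /\ (forall y g, y = y0 ^ g -> central (y ^+ p)) /\
  forall q : nat, (0 < q)%N -> (forall y g, y = y0 ^ g -> central (y ^+ q)) -> (p <= q)%N.

Definition s_Gamma (G : groupType) (e : seq G) (p : nat) : seq G :=
  flatten [seq nseq p y | y <- e].

From HB Require Import structures.
From mathcomp Require Import all_boot.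
Local Open Scope group_scope.

(* A Hurwitz move x_g x_h = x_h x_{g^h} conjugates by a letter of the word, so
   it preserves the subgroup generated by the letters; and when z^p is central
   the block x_z^p commutes with every word.  Since tau_i(s) > 2 n p, a
   pigeonhole argument lets us pull n blocks x_{z_1}^p ... x_{z_n}^p (with the
   z_k in the class, not necessarily distinct) to the front while keeping more
   than n p class letters behind, so that every z_k is still generated by the
   remaining word R.  Finally, since R s'' generates G, a block x_z^p can be
   conjugated to x_{z^g}^p for every g in G by sliding it across the letters
   of R s''; thus the n blocks can be turned into x_{y_1}^p ... x_{y_n}^p. *)

Section HurwitzMoves.
Local Set Implicit Arguments.
Local Unset Strict Implicit.
Variable G : groupType.
Implicit Types (s t u w : seq G) (x y z d : G).

Lemma hstep_catl u s t : hstep s t -> hstep (u ++ s) (u ++ t).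
Proof. by case=> a b g1 g2; rewrite !catA; constructor. Qed.

Lemma hstep_catr u s t : hstep s t -> hstep (s ++ u) (t ++ u).
Proof. by case=> a b g1 g2; rewrite -!catA; constructor. Qed.

Lemma sequiv_catl u s t : sequiv s t -> sequiv (u ++ s) (u ++ t).
Proof.
elim=> [s0 | s0 t0 /(hstep_catl u) | s0 t0 _ | s0 t0 u0 _ IH1 _ IH2].
- exact: sequiv_refl.
- exact: sequiv_step.
- exact: sequiv_sym.
- exact: sequiv_trans IH1 IH2.
Qed.

Lemma sequiv_catr u s t : sequiv s t -> sequiv (s ++ u) (t ++ u).
Proof.
elim=> [s0 | s0 t0 /(hstep_catr u) | s0 t0 _ | s0 t0 u0 _ IH1 _ IH2].
- exact: sequiv_refl.
- exact: sequiv_step.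
- exact: sequiv_sym.
- exact: sequiv_trans IH1 IH2.
Qed.

Lemma sequiv_swapr x y w : sequiv (x :: y :: w) (y :: x ^ y :: w).
Proof. by rewrite conjgE mulgA; apply: sequiv_step (hstep_r [::] w x y). Qed.

Lemma sequiv_swapl x y w : sequiv (x :: y :: w) (y ^ x^-1 :: x :: w).
Proof. by rewrite conjgE invgK mulgA; apply: sequiv_step (hstep_l [::] w x y). Qed.

Lemma sequiv_pull u x w : sequiv (u ++ x :: w) (x :: map (conjg^~ x) u ++ w).
Proof.
elim: u => [|a u IH] /=; first exact: sequiv_refl.
apply: sequiv_trans (sequiv_catl [:: a] IH) _; exact: sequiv_swapr.
Qed.

Lemma sequiv_push_nseq m z d w :
  sequiv (nseq m z ++ d :: w) (d ^ (z ^+ m)^-1 :: nseq m z ++ w).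
Proof.
elim: m => [|m IH] /=; first by rewrite expg0 invg1 conjg1; apply: sequiv_refl.
apply: sequiv_trans (sequiv_catl [:: z] IH) _.
by rewrite expgS invgM conjgM; apply: sequiv_swapl.
Qed.

Lemma sequiv_nseq_central m z w :
  central (z ^+ m) -> sequiv (nseq m z ++ w) (w ++ nseq m z).
Proof.
move=> zm_central; elim: w => [|d w IH]; first by rewrite cats0; apply: sequiv_refl.
apply: sequiv_trans (sequiv_push_nseq m z d w) _.
rewrite conjgE invgK mulgA zm_central mulgK.
exact: (sequiv_catl [:: d] IH).
Qed.

End HurwitzMoves.

Section GeneratedSubgroup.
Local Set Implicit Arguments.
Local Unset Strict Implicit.
Variable G : groupType.
Implicit Types (s t u w : seq G) (x y : G).

Definition sub_gen s t := forall x, x \in s -> gen_by (mem t) x.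

Lemma gen_by_sub s t x : gen_by (mem s) x -> sub_gen s t -> gen_by (mem t) x.
Proof.
move=> sx st; elim: sx => [y /st | | y1 y2 _ IH1 _ IH2 | y _ IH] //.
- exact: gen_one.
- exact: gen_mul.
- exact: gen_inv.
Qed.

Lemma sub_gen_subset s t : {subset s <= t} -> sub_gen s t.
Proof. by move=> st x /st; apply: gen_in. Qed.

Lemma sub_gen_trans s t u : sub_gen s t -> sub_gen t u -> sub_gen s u.
Proof. by move=> st tu x /st /gen_by_sub; apply. Qed.

Lemma sub_gen_cat s t u : sub_gen s u -> sub_gen t u -> sub_gen (s ++ t) u.
Proof. by move=> su tu x; rewrite mem_cat => /orP[/su | /tu]. Qed.

Lemma sub_gen_mid u w s t :
  sub_gen s t -> sub_gen (u ++ s ++ w) (u ++ t ++ w).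
Proof.
move=> st; apply: sub_gen_cat; first by apply: sub_gen_subset => x ux; rewrite mem_cat ux.
apply: sub_gen_cat; last by apply: sub_gen_subset => x wx; rewrite !mem_cat wx !orbT.
apply: sub_gen_trans st _; apply: sub_gen_subset => x tx.
by rewrite !mem_cat tx orbT.
Qed.

Lemma sub_gen_swap x y :
  sub_gen [:: x; y] [:: y; x ^ y] /\ sub_gen [:: y; x ^ y] [:: x; y].
Proof.
have gen1 z (s : seq G) : z \in s -> gen_by (mem s) z by apply: gen_in.
have [x_in y_in] : x \in [:: x; y] /\ y \in [:: x; y] by rewrite !inE !eqxx orbT.
have [y_in' xy_in] : y \in [:: y; x ^ y] /\ x ^ y \in [:: y; x ^ y].
  by rewrite !inE !eqxx orbT.
split=> z; rewrite !inE => /orP[] /eqP->.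
- rewrite [X in gen_by _ X](_ : x = y * x ^ y * y^-1); last first.
    by rewrite conjgE !mulgA mulgV mul1g mulgK.
  by apply: gen_mul; [apply: gen_mul | apply: gen_inv]; apply: gen1.
- exact: gen1.
- exact: gen1.
- by rewrite conjgE; apply: gen_mul; [apply: gen_inv | apply: gen_mul]; apply: gen1.
Qed.

Lemma hstep_sub_gen s t : hstep s t -> sub_gen s t /\ sub_gen t s.
Proof.
case=> a b g1 g2.
  have [st ts] := sub_gen_swap g1 g2.
  rewrite conjgE mulgA in st ts.
  by split; [exact: sub_gen_mid st | exact: sub_gen_mid ts].
have [st ts] := sub_gen_swap (g2 ^ g1^-1) g1.
rewrite conjgKV conjgE invgK mulgA in st ts.
by split; [exact: sub_gen_mid ts | exact: sub_gen_mid st].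
Qed.

Lemma sequiv_sub_gen s t : sequiv s t -> sub_gen s t.
Proof.
suff: sequiv s t -> sub_gen s t /\ sub_gen t s by move=> equiv_gen /equiv_gen [].
elim=> [s0 | s0 t0 /hstep_sub_gen // | s0 t0 _ [st ts] | s0 t0 u0 _ [st ts] _ [tu ut]].
- by split; apply: sub_gen_subset.
- by split.
- by split; [apply: sub_gen_trans st tu | apply: sub_gen_trans ut ts].
Qed.

Lemma full_word_sub_gen s t : full_word s -> sub_gen s t -> full_word t.
Proof. by move=> s_full st g; apply: gen_by_sub (s_full g) st. Qed.

End GeneratedSubgroup.

Lemma count_mem_le_size_mul (T : eqType) (e s : seq T) (p : nat) :
  (forall v, v \in e -> count (pred1 v) s <= p)%N -> (count (mem e) s <= size e * p)%N.
Proof.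
elim: e => [|v e IH] e_le; first by rewrite count_pred0.
rewrite (@eq_count _ _ (predU (pred1 v) (mem e))) => [|x]; last by rewrite /= inE.
apply: leq_trans (leq_addr (count (predI (pred1 v) (mem e)) s) _) _.
rewrite count_predUI mulSn leq_add ?e_le ?mem_head // IH // => w we.
by rewrite e_le // inE we orbT.
Qed.

Lemma count_pigeonhole (T : eqType) (e s : seq T) (p : nat) :
  (size e * p < count (mem e) s)%N -> exists2 v, v \in e & (p < count (pred1 v) s)%N.
Proof.
move=> e_big; apply/hasP; apply: contraLR e_big; rewrite -leqNgt => /hasPn e_le.
by apply: count_mem_le_size_mul => v /e_le; rewrite -leqNgt.
Qed.

Section PullLetters.
Local Set Implicit Arguments.
Local Unset Strict Implicit.
Variable G : groupType.
Implicit Types (R : seq G) (x v : G) (P A : pred G).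

Lemma conjg_eq_self x v : (x ^ v == v) = (x == v).
Proof.
have vv : v ^ v = v by rewrite conjgE mulKg.
by rewrite -[X in _ == X]vv (inj_eq (conjg_inj v)).
Qed.

Lemma sequiv_extract v R : v \in R -> exists R',
  [/\ sequiv R (v :: R'),
      forall P, (forall x, P (x ^ v) = P x) -> count P R = P v + count P R' &
      forall A, (forall x, A x -> A (x ^ v)) -> all A R -> all A R'].
Proof.
case/splitPr=> u w; exists (map (conjg^~ v) u ++ w); split.
- exact: sequiv_pull.
- move=> P Pv; rewrite !count_cat count_map /= (@eq_count _ _ P Pv).
  by rewrite addnCA.
- move=> A Av; rewrite !all_cat all_map /= => /and3P[Au _ ->]; rewrite andbT.
  by apply/allP=> x /(allP Au) /Av.
Qed.

Lemma sequiv_extract_nseq v m R : (m <= count (pred1 v) R)%N -> exists R',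
  [/\ sequiv R (nseq m v ++ R'),
      forall P, (forall x, P (x ^ v) = P x) -> count P R = m * P v + count P R' &
      forall A, (forall x, A x -> A (x ^ v)) -> all A R -> all A R'].
Proof.
elim: m R => [|m IH] R v_count.
  by exists R; split=> [|P _|//]; [apply: sequiv_refl | rewrite mul0n].
have vR : v \in R by rewrite -has_pred1 has_count (leq_trans _ v_count).
have [R1 [R_R1 count_R1 all_R1]] := sequiv_extract vR.
have v_count1 : (m <= count (pred1 v) R1)%N.
  by move: v_count; rewrite (count_R1 _ (conjg_eq_self ^~ v)) /= eqxx.
have [R' [R1_R' count_R' all_R']] := IH R1 v_count1.
exists R'; split.
- exact: sequiv_trans R_R1 (sequiv_catl [:: v] R1_R').
- by move=> P Pv; rewrite count_R1 // count_R' // mulSn addnA.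
- by move=> A Av AR; apply/all_R'/all_R1.
Qed.

End PullLetters.

Lemma s_Gamma_cons (G : groupType) (z : G) (zs : seq G) (p : nat) :
  s_Gamma (z :: zs) p = nseq p z ++ s_Gamma zs p.
Proof. by []. Qed.

Section ClassBlocks.
Local Set Implicit Arguments.
Local Unset Strict Implicit.
Variables (G : groupType) (y0 : G) (p : nat).
Hypothesis central_pow : forall g : G, central ((y0 ^ g) ^+ p).

Lemma sequiv_nseq_conj (W : seq G) (g h : G) : gen_by (mem W) g ->
  sequiv (nseq p (y0 ^ h) ++ W) (nseq p (y0 ^ (h * g)) ++ W).
Proof.
move=> W_g; elim: W_g h => [x xW | | x y _ IHx _ IHy | x _ IHx] h.
- have /splitPr[W1 W2] := xW.
  have to_front := sequiv_nseq_central W1 (central_pow h).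
  have past_x := sequiv_pull (nseq p (y0 ^ h)) x W2.
  rewrite map_nseq -conjgM in past_x.
  have to_back := sequiv_nseq_central (W1 ++ [:: x]) (central_pow (h * x)).
  rewrite catA; apply: sequiv_trans (sequiv_catr (x :: W2) to_front) _.
  rewrite -catA; apply: sequiv_trans (sequiv_catl W1 past_x) _.
  by move: (sequiv_catr W2 (sequiv_sym to_back)); rewrite -!catA.
- by rewrite mulg1; apply: sequiv_refl.
- by rewrite mulgA; apply: sequiv_trans (IHx h) (IHy (h * x)).
- by apply: sequiv_sym; have := IHx (h * x^-1); rewrite mulgVK.
Qed.

Lemma sequiv_s_Gamma (W zs ys : seq G) : generates (mem W) -> size zs = size ys ->
  (forall z, z \in zs -> exists g, z = y0 ^ g) ->
  (forall y, y \in ys -> exists g, y = y0 ^ g) ->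
  sequiv (s_Gamma zs p ++ W) (s_Gamma ys p ++ W).
Proof.
move=> W_gen; elim: zs ys => [|z zs IH] [|y ys] // => [_ _ _ | [size_eq] zs_cls ys_cls].
  exact: sequiv_refl.
have [h ->] := zs_cls z (mem_head _ _).
have [h' ->] := ys_cls y (mem_head _ _).
have g_gen : gen_by (mem (s_Gamma zs p ++ W)) (h^-1 * h').
  apply: gen_by_sub (W_gen _) _.
  by apply: sub_gen_subset => x xW; rewrite mem_cat xW orbT.
rewrite !s_Gamma_cons -!catA.
apply: sequiv_trans (sequiv_nseq_conj h g_gen) _; rewrite mulVKg.
apply/sequiv_catl/IH => // [z' z'zs | y' y'ys]; [apply: zs_cls | apply: ys_cls];
  by rewrite inE ?z'zs ?y'ys orbT.
Qed.

End ClassBlocks.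

Lemma enum_class_conj {G : groupType} {y0 : G} {e : seq G} :
  enum_class y0 e -> forall x g : G, (x ^ g \in e) = (x \in e).
Proof.
case=> _ e_class x g; apply/idP/idP => /e_class[h xh]; apply/e_class.
  by exists (h * g^-1); rewrite conjgM -xh conjgK.
by exists (h * g); rewrite conjgM -xh.
Qed.

Section ClassBlockPrefix.
Local Set Implicit Arguments.
Local Unset Strict Implicit.
Variables (G : groupType) (Y e : seq G) (p : nat).
Hypothesis Y_conj : forall (y g : G), y \in Y -> y ^ g \in Y.
Hypothesis e_conj : forall (x g : G), (x ^ g \in e) = (x \in e).

Lemma sequiv_s_Gamma_prefix (k : nat) (R : seq G) :
  word_over Y R -> ((size e + k) * p < count (mem e) R)%N ->
  exists zs R', [/\ size zs = k, {subset zs <= e}, word_over Y R',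
    sequiv R (s_Gamma zs p ++ R') & sub_gen (s_Gamma zs p) R'].
Proof.
elim: k R => [|k IH] R RY R_big.
  by exists [::], R; split=> //; apply: sequiv_refl.
have [v ve v_big] : exists2 v, v \in e & (p < count (pred1 v) R)%N.
  by apply: count_pigeonhole; apply: leq_ltn_trans R_big; rewrite leq_mul2r leq_addr orbT.
have [R1 [R_R1 count_R1 all_R1]] := sequiv_extract_nseq (ltnW v_big).
have R1Y : word_over Y R1 := all_R1 _ (Y_conj^~ v) RY.
have R1_big : ((size e + k) * p < count (mem e) R1)%N.
  move: R_big; rewrite (count_R1 _ (e_conj^~ v)) [pred_of_mem _ v]ve.
  by rewrite addnS mulSn muln1 ltn_add2l.
have v_R1 : v \in R1.
  rewrite -has_pred1 has_count; move: v_big.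
  by rewrite (count_R1 _ (fun x => conjg_eq_self x v)) eqxx muln1 -{1}[p]addn0 ltn_add2l.
have [zs [R' [size_zs zs_e R'Y R1_R' Gamma_R']]] := IH R1 R1Y R1_big.
exists (v :: zs), R'; split=> //.
- by rewrite /= size_zs.
- by move=> x; rewrite inE => /orP[/eqP-> | /zs_e].
- by rewrite s_Gamma_cons -catA; apply: sequiv_trans R_R1 (sequiv_catl _ R1_R').
have R'_R' : sub_gen R' R' by apply: sub_gen_subset.
have v_gen := gen_by_sub (sequiv_sub_gen R1_R' v_R1) (sub_gen_cat Gamma_R' R'_R').
by rewrite s_Gamma_cons; apply: sub_gen_cat _ Gamma_R' => x /nseqP[-> _].
Qed.

End ClassBlockPrefix.

Theorem corollary2p8 (G : groupType) (Y : seq G) (y0 : G) (e : seq G) (p : nat)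
    (s' s'' : seq G) :
  C_group Y ->
  y0 \in Y ->
  enum_class y0 e ->
  least_central_power y0 p ->
  word_over Y s' -> word_over Y s'' ->
  full_word (s' ++ s'') ->
  (2 * size e * p + 1 <= count (mem e) (s' ++ s''))%N ->
  count (mem e) s'' = 0%N ->
  exists si : seq G,
    [/\ word_over Y si,
        sequiv (s' ++ s'') (s_Gamma e p ++ si ++ s'') &
        full_word (si ++ s'')].
Proof.
case=> Y_conj _ _ _ _ e_enum [_ [central_pow _]] s'Y _ s_full tau_big tau_s''.
have s'_big : ((size e + size e) * p < count (mem e) s')%N.
  by rewrite addnn -mul2n; move: tau_big; rewrite count_cat tau_s'' addn0 addn1.
have [zs [R [size_zs zs_e RY s'_R Gamma_R]]] :=
  sequiv_s_Gamma_prefix Y_conj (enum_class_conj e_enum) s'Y s'_big.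
have s_R : sequiv (s' ++ s'') (s_Gamma zs p ++ R ++ s'').
  by rewrite catA; apply: sequiv_catr.
have R_full : full_word (R ++ s'').
  apply: full_word_sub_gen s_full (sub_gen_trans (sequiv_sub_gen s_R) _).
  by apply: sub_gen_cat; [apply: sub_gen_trans Gamma_R _ |];
    apply: sub_gen_subset => x; rewrite mem_cat => ->; rewrite ?orbT.
exists R; split=> //; apply: sequiv_trans s_R _; apply: sequiv_s_Gamma => //.
- by move=> g; apply: central_pow.
- by move=> z /zs_e /e_enum.2.
- by move=> z /e_enum.2.
Qed.
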